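(* Let $M$ be a down-shop-monoid on $[n]$, let $g$ be the maximal reflexive and symmetric multipermutation in $M$ (which is a blurred permutation), and let $f$ be a blurred permutation on $[n]$ that respects $g$. Then $f\in M$ if and only if there exists a multipermutation $f'$ that is a sub-multipermutation of $f$ with $f'\in M$.
   Context: A multipermutation on $[n]$ is a map $f:[n]\to\mathcal{P}([n])\setminus\{\emptyset\}$ with every $y$ in some $f(x)$; $(g\circ f)(x)=\{z:\exists y\,(y\in f(x)\wedge z\in g(y))\}$; $f'$ is a sub-multipermutation of $f$ if $f'(x)\subseteq f(x)$ for all $x$. A down-shop-monoid (DSM) is a set of multipermutations containing the identity $x\mapsto\{x\}$, closed under composition and under sub-multipermutations that are multipermutations; each DSM has a unique maximal (w.r.t. sub-multipermutation) reflexive ($a\in g(a)$) and symmetric ($a\in g(b)\iff b\in g(a)$) member. A blurred permutation with associated partition $P_1,\dots,P_m$ is a multipermutation $h$ for which there is a permutation $\sigma$ of $[m]$ ($m\le n$) with $i\in P_i$ for $i\in[m]$ and $h(x)=P_{\sigma(i)}$ for all $x\in P_i$. A multipermutation $f$ respects the blurred permutation $g$ (with partition $P_1,\dots,P_m$) if neither (i) there are $a,b$ in the same block and $c,d$ in distinct blocks with $c\in f(a)$, $d\in f(b)$, nor (ii) there are $a,b$ in distinct blocks and $c,d$ in the same block with $c\in f(a)$, $d\in f(b)$. *)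

From mathcomp Require Import all_boot.
Set Implicit Arguments. Unset Strict Implicit. Unset Printing Implicit Defensive.

Definition mperm (n : nat) := {ffun 'I_n -> {set 'I_n}}.

Definition is_multiperm n (f : mperm n) : Prop :=
  (forall x, f x != set0) /\ (forall y, exists x, y \in f x).

Definition mp_id n : mperm n := [ffun x => [set x]].

Definition mp_comp n (g f : mperm n) : mperm n :=
  [ffun x => \bigcup_(y in f x) g y].

Definition submp n (f' f : mperm n) : Prop := forall x, f' x \subset f x.

Definition is_DSM n (M : {set mperm n}) : Prop :=
  [/\ (forall f, f \in M -> is_multiperm f),
      mp_id n \in M,
      (forall f g, f \in M -> g \in M -> mp_comp g f \in M) &
      (forall f f', f \in M -> is_multiperm f' -> submp f' f -> f' \in M)].

Definition mp_reflexive n (g : mperm n) : Prop := forall a, a \in g a.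
Definition mp_symmetric n (g : mperm n) : Prop :=
  forall a b, (a \in g b) <-> (b \in g a).

Definition max_refl_sym n (M : {set mperm n}) (g : mperm n) : Prop :=
  [/\ g \in M, mp_reflexive g, mp_symmetric g &
      forall h, h \in M -> mp_reflexive h -> mp_symmetric h -> submp g h -> h = g].

(* h is a blurred permutation with associated partition P (of [n], into
   nonempty blocks) and block permutation sigma: h(x) = sigma(block of x). *)
Definition blurred_with n (h : mperm n) (P : {set {set 'I_n}})
  (sigma : {set 'I_n} -> {set 'I_n}) : Prop :=
  [/\ is_multiperm h, partition P [set: 'I_n],
      {in P &, injective sigma}, sigma @: P = P &
      forall x, h x = sigma (pblock P x)].

Definition blurred n (h : mperm n) : Prop :=
  exists P sigma, blurred_with h P sigma.

Definition respects n (f : mperm n) (P : {set {set 'I_n}}) : Prop :=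
  ~ (exists a b c d, pblock P a = pblock P b /\ pblock P c <> pblock P d /\
                     c \in f a /\ d \in f b) /\
  ~ (exists a b c d, pblock P a <> pblock P b /\ pblock P c = pblock P d /\
                     c \in f a /\ d \in f b).

(* A nonempty f' below f lifts back above f through the blurred permutation g:
   for z in f' x, every c in f x lies in the same P-block as z (f respects P),
   and since g is reflexive and constant on P-blocks, c lies in g z.  Hence
   f is a sub-multipermutation of g \o f', which lies in M. *)
From mathcomp Require Import all_boot.

Set Implicit Arguments.
Unset Strict Implicit.
Unset Printing Implicit Defensive.

Section BlurredLift.

Variables (n : nat) (P : {set {set 'I_n}}).

Lemma mem_mp_compP (g f : mperm n) x z :
  reflect (exists2 y, y \in f x & z \in g y) (z \in mp_comp g f x).
Proof. by rewrite ffunE; apply: (iffP bigcupP). Qed.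

Lemma respects_pblock_eq (f : mperm n) x c d :
  respects f P -> c \in f x -> d \in f x -> pblock P c = pblock P d.
Proof.
move=> [split_block _] cf df.
case: (eqVneq (pblock P c) (pblock P d)) => // ncd.
by case: split_block; exists x, x, c, d; split; last split=> //; apply/eqP.
Qed.

Lemma blurred_refl_mem_pblock (g : mperm n) sigma c z :
  blurred_with g P sigma -> mp_reflexive g ->
  pblock P c = pblock P z -> c \in g z.
Proof. by move=> [_ _ _ _ gE] grefl Ecz; rewrite gE -Ecz -gE. Qed.

Lemma submp_comp_blurred (g : mperm n) sigma (f f' : mperm n) :
  blurred_with g P sigma -> mp_reflexive g -> respects f P ->
  (forall x, f' x != set0) -> submp f' f -> submp f (mp_comp g f').
Proof.
move=> gP grefl fP f'ne f'f x; apply/subsetP => c cf.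
have /set0Pn [z zf'] := f'ne x.
have zf : z \in f x by apply: (subsetP (f'f x)).
apply/mem_mp_compP; exists z => //.
exact: blurred_refl_mem_pblock gP grefl (respects_pblock_eq fP cf zf).
Qed.

End BlurredLift.

Theorem lemma3p6 (n : nat) (M : {set mperm n}) (g : mperm n)
  (P : {set {set 'I_n}}) (sigma : {set 'I_n} -> {set 'I_n}) (f : mperm n) :
  is_DSM M ->
  max_refl_sym M g ->
  blurred_with g P sigma ->
  blurred f ->
  respects f P ->
  (f \in M <-> exists f' : mperm n, is_multiperm f' /\ submp f' f /\ f' \in M).
Proof.
move=> [M_mp _ M_comp M_down] [gM grefl _ _] gP [Q [tau [fmp _ _ _ _]]] fP.
split=> [fM | [f' [[f'ne _] [f'f f'M]]]].
  by exists f; split; [exact: M_mp | split=> // x].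
apply: (M_down (mp_comp g f')) => //; first exact: M_comp.
exact: submp_comp_blurred gP grefl fP f'ne f'f.
Qed.
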